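(* Assume Hypothesis (H). Let $T\in\mathcal M$, let $\mathfrak k$ be a Lie subalgebra with $\mathfrak h\subsetneq\mathfrak k$, and let $\tau>0$. Then the set $\mathcal C(\mathfrak k,\tau)=\{g\in\mathcal M_T(\mathfrak k):\lambda_+(g)\le\tau\}$ is compact in $\mathcal M_T(\mathfrak k)$.
   Context: Let $G$ be a compact connected Lie group with Lie algebra $\mathfrak g$ and $H<G$ a closed connected subgroup with Lie algebra $\mathfrak h$; $M=G/H$, $\dim M\ge3$. Fix an $\mathrm{Ad}(G)$-invariant inner product $Q$ on $\mathfrak g$; $\mathfrak v\ominus\mathfrak u$ is the $Q$-orthogonal complement; $\mathfrak m=\mathfrak g\ominus\mathfrak h$. $\mathcal M$ is the set of $\mathrm{Ad}(H)$-invariant inner products on $\mathfrak m$. $\mathcal M(\mathfrak k)$ is the set of $\mathrm{Ad}(H)$-invariant inner products on $\mathfrak k\ominus\mathfrak h$, with the topology inherited from the space of bilinear forms on $\mathfrak k\ominus\mathfrak h$; $\mathcal M_T(\mathfrak k)=\{g\in\mathcal M(\mathfrak k):\mathrm{tr}_gT|_{\mathfrak k\ominus\mathfrak h}=1\}$ with the subspace topology, where $\mathrm{tr}_g$ denotes trace with respect to $g$. For $g\in\mathcal M(\mathfrak k)$, $\lambda_+(g)$ is the supremum of $g(X,X)$ over $X\in\mathfrak k\ominus\mathfrak h$ with $Q(X,X)=1$. Hypothesis (H): every Lie subalgebra $\mathfrak s\subset\mathfrak g$ with $\mathfrak h\subsetneq\mathfrak s$ satisfies (1) for all nonzero $\mathrm{Ad}(H)$-invariant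 subspaces $\mathfrak u\subset\mathfrak s\ominus\mathfrak h$ and $\mathfrak v\subset\mathfrak g\ominus\mathfrak s$, the representations $\mathrm{Ad}(H)|_{\mathfrak u}$ and $\mathrm{Ad}(H)|_{\mathfrak v}$ are inequivalent; (2) $[\mathfrak r,\mathfrak s]\neq\{0\}$ for every $\mathrm{Ad}(H)$-invariant one-dimensional subspace $\mathfrak r\subset\mathfrak g\ominus\mathfrak s$. *)

(* Model: g = R^n in Q-orthonormal coordinates (so Q = standard dot product),
   vectors are functions nat -> R (only indices < n matter), bilinear forms on
   a subspace V of R^n are n x n matrices "supported on V". *)
From Stdlib Require Import Reals List.
Open Scope R_scope.

Definition vec := nat -> R.
Definition mat := nat -> nat -> R.

Fixpoint rsum (n : nat) (f : nat -> R) : R :=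
  match n with O => 0 | S m => rsum m f + f m end.

Definition dot (n : nat) (x y : vec) : R := rsum n (fun i => x i * y i).
Definition vadd (x y : vec) : vec := fun i => x i + y i.
Definition vscal (a : R) (x : vec) : vec := fun i => a * x i.
Definition veq (x y : vec) : Prop := forall i, x i = y i.
Definition inRn (n : nat) (x : vec) : Prop := forall i, (n <= i)%nat -> x i = 0.
Definition nonzero_vec (x : vec) : Prop := exists i, x i <> 0.

Definition is_subspace (n : nat) (S : vec -> Prop) : Prop :=
  (forall x, S x -> inRn n x) /\
  (forall x y, S x -> veq x y -> S y) /\
  S (fun _ => 0) /\
  (forall x y, S x -> S y -> S (vadd x y)) /\
  (forall a x, S x -> S (vscal a x)).

Definition whole (n : nat) : vec -> Prop := inRn n.
Definition nontrivial (S : vec -> Prop) : Prop := exists x, S x /\ nonzero_vec x.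

Definition ocomp (n : nat) (V U : vec -> Prop) : vec -> Prop :=
  fun x => V x /\ forall y, U y -> dot n x y = 0.

Definition dim_ge (n : nat) (V : vec -> Prop) (d : nat) : Prop :=
  exists f : nat -> vec, (forall j, (j < d)%nat -> V (f j)) /\
    forall c : nat -> R, (forall i, rsum d (fun j => c j * f j i) = 0) ->
      forall j, (j < d)%nat -> c j = 0.

Definition one_dim (r : vec -> Prop) : Prop :=
  exists e, nonzero_vec e /\ forall x, r x <-> exists a, veq x (vscal a e).

Definition is_lie_algebra (n : nat) (br : vec -> vec -> vec) : Prop :=
  (forall x y, inRn n x -> inRn n y -> inRn n (br x y)) /\
  (forall x x' y y', veq x x' -> veq y y' -> veq (br x y) (br x' y')) /\
  (forall a b x y z, inRn n x -> inRn n y -> inRn n z ->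
     veq (br (vadd (vscal a x) (vscal b y)) z)
         (vadd (vscal a (br x z)) (vscal b (br y z)))) /\
  (forall x y, inRn n x -> inRn n y -> veq (br x y) (vscal (-1) (br y x))) /\
  (forall x y z, inRn n x -> inRn n y -> inRn n z ->
     veq (vadd (br x (br y z)) (vadd (br y (br z x)) (br z (br x y))))
         (fun _ => 0)).

(* Q (= dot) is ad(g)-invariant, equivalently Ad(G)-invariant for connected G *)
Definition Q_ad_invariant (n : nat) (br : vec -> vec -> vec) : Prop :=
  forall x y z, inRn n x -> inRn n y -> inRn n z ->
    dot n (br x y) z = - dot n y (br x z).

Definition is_subalgebra (n : nat) (br : vec -> vec -> vec) (s : vec -> Prop) : Prop :=
  is_subspace n s /\ forall x y, s x -> s y -> s (br x y).

(* Ad(H)-invariance, H connected with Lie algebra h: ad(h)-invariance *)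
Definition ad_inv (br : vec -> vec -> vec) (h U : vec -> Prop) : Prop :=
  forall Y x, h Y -> U x -> U (br Y x).

(* equivalence of the representations of H (equivalently of h) on U and V *)
Definition rep_equiv (br : vec -> vec -> vec) (h U V : vec -> Prop) : Prop :=
  exists phi : vec -> vec,
    (forall x, U x -> V (phi x)) /\
    (forall a b x y, U x -> U y ->
       veq (phi (vadd (vscal a x) (vscal b y))) (vadd (vscal a (phi x)) (vscal b (phi y)))) /\
    (forall x y, U x -> U y -> veq (phi x) (phi y) -> veq x y) /\
    (forall y, V y -> exists x, U x /\ veq (phi x) y) /\
    (forall Y x, h Y -> U x -> veq (phi (br Y x)) (br Y (phi x))).

Definition Hyp_H (n : nat) (br : vec -> vec -> vec) (h : vec -> Prop) : Prop :=
  forall s, is_subalgebra n br s -> (forall x, h x -> s x) -> (exists x, s x /\ ~ h x) ->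
    (forall u v, is_subspace n u -> is_subspace n v -> nontrivial u -> nontrivial v ->
       ad_inv br h u -> ad_inv br h v ->
       (forall x, u x -> ocomp n s h x) -> (forall x, v x -> ocomp n (whole n) s x) ->
       ~ rep_equiv br h u v) /\
    (forall r, is_subspace n r -> one_dim r -> ad_inv br h r ->
       (forall x, r x -> ocomp n (whole n) s x) ->
       exists x y, r x /\ s y /\ nonzero_vec (br x y)).

Definition bil (n : nat) (B : mat) (x y : vec) : R :=
  rsum n (fun i => rsum n (fun j => x i * B i j * y j)).

(* B represents a bilinear form on the subspace V: it vanishes outside n x n
   and as soon as one argument is Q-orthogonal to V *)
Definition supported_on (n : nat) (V : vec -> Prop) (B : mat) : Prop :=
  (forall i j, (n <= i)%nat \/ (n <= j)%nat -> B i j = 0) /\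
  (forall x y, inRn n x -> inRn n y -> (forall v, V v -> dot n x v = 0) ->
     bil n B x y = 0 /\ bil n B y x = 0).

Definition inv_inner_product (n : nat) (br : vec -> vec -> vec) (h V : vec -> Prop)
  (B : mat) : Prop :=
  supported_on n V B /\
  (forall i j, B i j = B j i) /\
  (forall x, V x -> nonzero_vec x -> 0 < bil n B x x) /\
  (forall Y x y, h Y -> V x -> V y -> bil n B (br Y x) y + bil n B x (br Y y) = 0).

(* trace of T|_V with respect to the inner product G on V equals t:
   computed in a G-orthonormal basis of V *)
Definition trace_wrt (n : nat) (V : vec -> Prop) (G T : mat) (t : R) : Prop :=
  exists (d : nat) (e : nat -> vec),
    (forall i, (i < d)%nat -> V (e i)) /\
    (forall i j, (i < d)%nat -> (j < d)%nat ->
       bil n G (e i) (e j) = if Nat.eqb i j then 1 else 0) /\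
    (forall x, V x -> exists c : nat -> R, veq x (fun k => rsum d (fun i => c i * e i k))) /\
    t = rsum d (fun i => bil n T (e i) (e i)).

(* lambda_+(G) <= tau, with lambda_+(G) = sup { G(X,X) : X in V, Q(X,X) = 1 } *)
Definition lambda_plus_le (n : nat) (V : vec -> Prop) (G : mat) (tau : R) : Prop :=
  forall X, V X -> dot n X X = 1 -> bil n G X X <= tau.

Definition M_k (n : nat) (br : vec -> vec -> vec) (h k : vec -> Prop) : mat -> Prop :=
  inv_inner_product n br h (ocomp n k h).
Definition M_T_k (n : nat) (br : vec -> vec -> vec) (h k : vec -> Prop) (T : mat) :
  mat -> Prop := fun G => M_k n br h k G /\ trace_wrt n (ocomp n k h) G T 1.
Definition C_set (n : nat) (br : vec -> vec -> vec) (h k : vec -> Prop) (T : mat)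
  (tau : R) : mat -> Prop :=
  fun G => M_T_k n br h k T G /\ lambda_plus_le n (ocomp n k h) G tau.

(* topology on (matrices representing) bilinear forms: the entrywise one *)
Definition mball (n : nat) (A : mat) (eps : R) (B : mat) : Prop :=
  forall i j, (i < n)%nat -> (j < n)%nat -> Rabs (B i j - A i j) < eps.
Definition mopen (n : nat) (U : mat -> Prop) : Prop :=
  forall A, U A -> exists eps, 0 < eps /\ forall B, mball n A eps B -> U B.
Definition mcompact (n : nat) (C : mat -> Prop) : Prop :=
  forall (I : Type) (U : I -> mat -> Prop), (forall i, mopen n (U i)) ->
    (forall A, C A -> exists i, U i A) ->
    exists l : list I, forall A, C A -> exists i, In i l /\ U i A.

From Pilot Require Import Defs.
From Stdlib Require Import Reals List Lra Lia Classical.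
Open Scope R_scope.

(* Fix a T-orthonormal basis p of V = k ⊖ h.  If g lies in C(k, tau), its
   g-orthonormal bases have dim V vectors, and the coordinates C of one of them in
   the basis p satisfy sum_ij C_ij^2 = tr_g T = 1; the bound lambda_+(g) <= tau bounds
   the entries of g.  Hence C(k, tau) is the projection of the set of pairs (g, C)
   cut out by closed conditions (the basis with coordinates C is g-orthonormal, the
   trace identity, invariance, the lambda_+ bound) inside a product of boxes, which is
   compact by Tychonoff.  Positivity of g, which is not a closed condition, is recovered
   from the g-orthonormal basis encoded by C. *)

Lemma rsum_ext n f g : (forall i, (i < n)%nat -> f i = g i) -> rsum n f = rsum n g.
Proof. induction n; intros H; simpl; [reflexivity|]. rewrite IHn, H; auto. Qed.

Lemma rsum_add n f g : rsum n (fun i => f i + g i) = rsum n f + rsum n g.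
Proof. induction n; simpl; [lra|]. rewrite IHn; lra. Qed.

Lemma rsum_mul_l n a f : rsum n (fun i => a * f i) = a * rsum n f.
Proof. induction n; simpl; [lra|]. rewrite IHn; lra. Qed.

Lemma rsum_mul_r n a f : rsum n (fun i => f i * a) = rsum n f * a.
Proof. induction n; simpl; [lra|]. rewrite IHn; lra. Qed.

Lemma rsum_zero n f : (forall i, (i < n)%nat -> f i = 0) -> rsum n f = 0.
Proof. induction n; intros H; simpl; [reflexivity|]. rewrite IHn, H; auto; lra. Qed.

Lemma rsum_swap n m (f : nat -> nat -> R) :
  rsum n (fun i => rsum m (fun j => f i j)) = rsum m (fun j => rsum n (fun i => f i j)).
Proof.
  induction n; simpl.
  - symmetry; apply rsum_zero; auto.
  - rewrite IHn, <- rsum_add. reflexivity.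
Qed.

Lemma rsum_single n k f : (k < n)%nat -> (forall i, (i < n)%nat -> i <> k -> f i = 0) ->
  rsum n f = f k.
Proof.
  induction n; intros Hk H; [lia|]. simpl.
  destruct (Nat.eq_dec k n) as [->|Hne].
  - rewrite (rsum_zero n f); [lra|]. intros i Hi; apply H; lia.
  - rewrite IHn, (H n); [lra|lia|lia|lia|intros; apply H; lia].
Qed.

Lemma rsum_kron_l n k f : (k < n)%nat ->
  rsum n (fun i => (if Nat.eqb k i then 1 else 0) * f i) = f k.
Proof.
  intros Hk. rewrite (rsum_single n k); [rewrite Nat.eqb_refl; ring | auto |].
  intros i _ Hi. destruct (Nat.eqb_spec k i); [lia | ring].
Qed.

Lemma rsum_kron_r n k f : (k < n)%nat ->
  rsum n (fun i => f i * (if Nat.eqb i k then 1 else 0)) = f k.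
Proof.
  intros Hk. rewrite <- (rsum_kron_l n k f Hk). apply rsum_ext. intros i _.
  rewrite (Nat.eqb_sym i k). ring.
Qed.

Lemma rsum_nonneg n f : (forall i, (i < n)%nat -> 0 <= f i) -> 0 <= rsum n f.
Proof.
  induction n; intros H; simpl; [lra|].
  assert (0 <= rsum n f) by (apply IHn; auto). specialize (H n ltac:(lia)). lra.
Qed.

Lemma rsum_ge_term n k f : (forall i, (i < n)%nat -> 0 <= f i) -> (k < n)%nat -> f k <= rsum n f.
Proof.
  induction n; intros H Hk; [lia|]. simpl.
  assert (0 <= rsum n f) by (apply rsum_nonneg; auto).
  destruct (Nat.eq_dec k n) as [->|Hne]; [lra|].
  assert (f k <= rsum n f) by (apply IHn; auto; lia). specialize (H n ltac:(lia)). lra.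
Qed.

Lemma rsum_const1 n : rsum n (fun _ => 1) = INR n.
Proof. induction n; [reflexivity|]. simpl rsum. rewrite IHn, S_INR. lra. Qed.

Lemma veq_refl x : veq x x.
Proof. intros k; reflexivity. Qed.

Definition lc (d : nat) (c : nat -> R) (e : nat -> vec) : vec :=
  fun k => rsum d (fun i => c i * e i k).

Definition in_span (d : nat) (e : nat -> vec) (x : vec) : Prop :=
  exists c, veq x (lc d c e).

Lemma lc_ext d c c' e e' : (forall i, (i < d)%nat -> c i = c' i /\ veq (e i) (e' i)) ->
  veq (lc d c e) (lc d c' e').
Proof. intros H k. apply rsum_ext. intros i Hi. destruct (H i Hi) as [-> ->]. reflexivity. Qed.

Lemma lc_lc d d' c (D : nat -> nat -> R) b :
  veq (lc d c (fun i => lc d' (D i) b)) (lc d' (fun l => rsum d (fun i => c i * D i l)) b).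
Proof.
  intros k. unfold lc.
  transitivity (rsum d (fun i => rsum d' (fun l => c i * D i l * b l k))).
  - apply rsum_ext; intros i _. rewrite <- rsum_mul_l. apply rsum_ext; intros; ring.
  - rewrite rsum_swap. apply rsum_ext; intros l _. rewrite <- rsum_mul_r.
    apply rsum_ext; intros; ring.
Qed.

Lemma in_span_trans d d' e f x : (forall i, (i < d)%nat -> in_span d' f (e i)) ->
  in_span d e x -> in_span d' f x.
Proof.
  intros Hef [c Hc].
  assert (HD : exists D, forall i, (i < d)%nat -> veq (e i) (lc d' (D i) f)).
  { clear Hc. induction d as [|d IH].
    - exists (fun _ _ => 0). intros; lia.
    - destruct IH as [D HD]; [intros; apply Hef; lia|].
      destruct (Hef d (Nat.lt_succ_diag_r d)) as [cd Hcd].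
      exists (fun i => if Nat.eqb i d then cd else D i). intros i Hi.
      destruct (Nat.eqb_spec i d) as [->|]; [auto | apply HD; lia]. }
  destruct HD as [D HD]. exists (fun l => rsum d (fun i => c i * D i l)).
  intros k. rewrite Hc, <- lc_lc. apply lc_ext. intros i Hi. auto.
Qed.

Definition snoc (p : nat -> vec) (d : nat) (v : vec) : nat -> vec :=
  fun i => if Nat.eqb i d then v else p i.

Lemma lc_snoc d c p v : veq (lc (S d) c (snoc p d v)) (vadd (lc d c p) (vscal (c d) v)).
Proof.
  intros k. unfold lc, vadd, vscal, snoc. simpl rsum. rewrite Nat.eqb_refl. f_equal.
  apply rsum_ext. intros i Hi. destruct (Nat.eqb_spec i d); [lia|reflexivity].
Qed.

Lemma in_span_snoc d p v x : in_span d p x -> in_span (S d) (snoc p d v) x.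
Proof.
  intros [c Hc]. exists (fun i => if Nat.eqb i d then 0 else c i). intros k.
  rewrite lc_snoc. unfold vadd, vscal. rewrite Nat.eqb_refl, Hc, Rmult_0_l, Rplus_0_r.
  apply rsum_ext. intros i Hi. destruct (Nat.eqb_spec i d); [lia|reflexivity].
Qed.

Section Subspace.
Variables (n : nat) (V : vec -> Prop).
Hypothesis HV : is_subspace n V.

Lemma subspace_inRn x : V x -> inRn n x.
Proof. apply HV. Qed.

Lemma subspace_veq x y : V x -> veq x y -> V y.
Proof. apply HV. Qed.

Lemma subspace_add x y : V x -> V y -> V (vadd x y).
Proof. apply HV. Qed.

Lemma subspace_scal a x : V x -> V (vscal a x).
Proof. apply HV. Qed.

Lemma subspace_lc d c e : (forall i, (i < d)%nat -> V (e i)) -> V (lc d c e).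
Proof.
  intros He. induction d.
  - apply (subspace_veq (fun _ => 0)); [apply HV | intros k; reflexivity].
  - apply (subspace_veq (vadd (lc d c e) (vscal (c d) (e d)))); [|intros k; reflexivity].
    apply subspace_add; [apply IHd; auto | apply subspace_scal, He; lia].
Qed.

End Subspace.

Record left_linear (F : vec -> vec -> R) : Prop := {
  ll_ext : forall x x' y, veq x x' -> F x y = F x' y;
  ll_add : forall x x' y, F (vadd x x') y = F x y + F x' y;
  ll_scal : forall a x y, F (vscal a x) y = a * F x y }.

Record inner_form (V : vec -> Prop) (F : vec -> vec -> R) : Prop := {
  if_linear : left_linear F;
  if_sym : forall x y, F x y = F y x;
  if_pos : forall x, V x -> nonzero_vec x -> 0 < F x x }.

Definition orthonormal (F : vec -> vec -> R) (d : nat) (p : nat -> vec) : Prop :=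
  forall i j, (i < d)%nat -> (j < d)%nat -> F (p i) (p j) = if Nat.eqb i j then 1 else 0.

Section LeftLinear.
Variable F : vec -> vec -> R.
Hypothesis HF : left_linear F.

Lemma ll_lc d c e y : F (lc d c e) y = rsum d (fun i => c i * F (e i) y).
Proof.
  induction d; simpl.
  - rewrite (ll_ext F HF _ (vscal 0 y)), (ll_scal F HF); [ring | intros k; unfold lc, vscal; simpl; ring].
  - rewrite (ll_ext F HF _ (vadd (lc d c e) (vscal (c d) (e d)))), (ll_add F HF), (ll_scal F HF);
      [rewrite IHd; reflexivity | intros k; reflexivity].
Qed.

Lemma orthonormal_coef d c p j : orthonormal F d p -> (j < d)%nat -> F (lc d c p) (p j) = c j.
Proof.
  intros Hp Hj. rewrite ll_lc, <- (rsum_kron_r d j c Hj). apply rsum_ext. intros i Hi.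
  rewrite Hp; auto.
Qed.

Lemma orthonormal_expand d p x : orthonormal F d p -> in_span d p x ->
  veq x (lc d (fun i => F x (p i)) p).
Proof.
  intros Hp [c Hc] k. rewrite Hc. apply lc_ext. intros i Hi. split; [|apply veq_refl].
  rewrite (ll_ext F HF x (lc d c p)), orthonormal_coef; auto.
Qed.

End LeftLinear.

(* Invariance of dimension: the Gram matrices [M] and [N] of the two families satisfy
   [M N = 1] and [N M = 1], and both traces of [M N] count the sizes. *)
Lemma orthonormal_spanning_size F1 F2 d d' f g :
  left_linear F1 -> left_linear F2 -> orthonormal F1 d f -> orthonormal F2 d' g ->
  (forall i, (i < d)%nat -> in_span d' g (f i)) ->
  (forall j, (j < d')%nat -> in_span d f (g j)) -> d = d'.
Proof.
  intros HF1 HF2 Hf Hg Hfg Hgf.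
  set (M := fun i j => F2 (f i) (g j)). set (N := fun j l => F1 (g j) (f l)).
  assert (H1 : forall i, (i < d)%nat -> rsum d' (fun j => M i j * N j i) = 1).
  { intros i Hi. transitivity (F1 (f i) (f i)); [|rewrite Hf, Nat.eqb_refl; auto].
    rewrite (ll_ext F1 HF1 _ _ _ (orthonormal_expand F2 HF2 d' g (f i) Hg (Hfg i Hi))).
    symmetry. apply ll_lc; auto. }
  assert (H2 : forall j, (j < d')%nat -> rsum d (fun i => N j i * M i j) = 1).
  { intros j Hj. transitivity (F2 (g j) (g j)); [|rewrite Hg, Nat.eqb_refl; auto].
    rewrite (ll_ext F2 HF2 _ _ _ (orthonormal_expand F1 HF1 d f (g j) Hf (Hgf j Hj))).
    symmetry. apply ll_lc; auto. }
  apply INR_eq. rewrite <- !rsum_const1.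
  rewrite (rsum_ext d _ (fun i => rsum d' (fun j => M i j * N j i))); [|intros; rewrite H1; auto].
  rewrite rsum_swap. apply rsum_ext. intros j Hj. rewrite <- (H2 j Hj).
  apply rsum_ext; intros; ring.
Qed.

Definition orthonormal_basis (V : vec -> Prop) (F : vec -> vec -> R) (d : nat) (p : nat -> vec)
  : Prop :=
  (forall i, (i < d)%nat -> V (p i)) /\ orthonormal F d p /\ (forall x, V x -> in_span d p x).

Section GramSchmidt.
Variables (n : nat) (V : vec -> Prop) (F : vec -> vec -> R).
Hypotheses (HV : is_subspace n V) (HF : inner_form V F).

Let HL := if_linear V F HF.

Lemma orthonormal_snoc d p u : orthonormal F d p ->
  (forall j, (j < d)%nat -> F u (p j) = 0) -> F u u = 1 -> orthonormal F (S d) (snoc p d u).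
Proof.
  intros Hp Hup Huu i j Hi Hj. unfold snoc.
  destruct (Nat.eqb_spec i d) as [->|Hid]; destruct (Nat.eqb_spec j d) as [->|Hjd].
  - rewrite Nat.eqb_refl. exact Huu.
  - rewrite Hup by lia. destruct (Nat.eqb_spec d j); [lia|reflexivity].
  - rewrite (if_sym V F HF), Hup by lia. destruct (Nat.eqb_spec i d); [lia|reflexivity].
  - apply Hp; lia.
Qed.

Lemma gram_schmidt_step d p b : (forall i, (i < d)%nat -> V (p i)) -> orthonormal F d p -> V b ->
  exists d' p', (forall i, (i < d')%nat -> V (p' i)) /\ orthonormal F d' p' /\
    (forall x, in_span d p x -> in_span d' p' x) /\ in_span d' p' b.
Proof.
  intros HpV Hp Hb.
  set (c := fun i => F b (p i)).
  set (w := vadd b (vscal (-1) (lc d c p))).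
  assert (HwV : V w).
  { apply (subspace_add n); auto. apply (subspace_scal n), (subspace_lc n); auto. }
  assert (Hwp : forall j, (j < d)%nat -> F w (p j) = 0).
  { intros j Hj. unfold w. rewrite (ll_add F HL), (ll_scal F HL), orthonormal_coef; auto.
    unfold c. ring. }
  destruct (classic (nonzero_vec w)) as [Hnz|Hz].
  - assert (Hww : 0 < F w w) by (apply (if_pos V F HF); auto).
    set (s := sqrt (F w w)).
    assert (Hs : 0 < s) by (apply sqrt_lt_R0; auto).
    assert (Hss : s * s = F w w) by (apply sqrt_sqrt; lra).
    exists (S d), (snoc p d (vscal (/ s) w)). split; [|split; [|split]].
    + intros i Hi. unfold snoc. destruct (Nat.eqb_spec i d).
      * apply (subspace_scal n); auto.
      * apply HpV; lia.
    + apply orthonormal_snoc; auto.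
      * intros j Hj. rewrite (ll_scal F HL), Hwp; auto. ring.
      * rewrite (ll_scal F HL), (if_sym V F HF), (ll_scal F HL), <- Hss. field. lra.
    + intros x. apply in_span_snoc.
    + exists (fun i => if Nat.eqb i d then s else c i). intros k.
      rewrite lc_snoc. unfold vadd, vscal. rewrite Nat.eqb_refl.
      assert (E : lc d (fun i => if Nat.eqb i d then s else c i) p k = lc d c p k).
      { apply lc_ext. intros i Hi. split; [|apply veq_refl].
        destruct (Nat.eqb_spec i d); [lia|reflexivity]. }
      rewrite E. unfold w, vadd, vscal. field. lra.
  - exists d, p. split; [|split; [|split]]; auto.
    exists c. intros k. apply NNPP. intros Hk. apply Hz. exists k.
    unfold w, vadd, vscal. lra.
Qed.

Lemma gram_schmidt m b : (forall j, (j < m)%nat -> V (b j)) ->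
  exists d p, (forall i, (i < d)%nat -> V (p i)) /\ orthonormal F d p /\
    (forall j, (j < m)%nat -> in_span d p (b j)).
Proof.
  induction m as [|m IH]; intros Hb.
  - exists O, (fun _ => fun _ => 0). unfold orthonormal. split; [|split]; intros; lia.
  - destruct IH as (d & p & HpV & Hp & Hbp); [intros; apply Hb; lia|].
    destruct (gram_schmidt_step d p (b m) HpV Hp (Hb m (Nat.lt_succ_diag_r m)))
      as (d' & p' & Hp'V & Hp' & Hpp' & Hbm).
    exists d', p'. split; [|split]; auto.
    intros j Hj. destruct (Nat.eq_dec j m) as [->|]; auto. apply Hpp', Hbp; lia.
Qed.

Lemma exists_orthonormal_basis m b : (forall j, (j < m)%nat -> V (b j)) ->
  (forall x, V x -> in_span m b x) -> exists d p, orthonormal_basis V F d p.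
Proof.
  intros HbV Hb. destruct (gram_schmidt m b HbV) as (d & p & HpV & Hp & Hbp).
  exists d, p. split; [|split]; auto. intros x Hx. apply (in_span_trans m d b); auto.
Qed.

End GramSchmidt.

Section BilinearForms.
Variables (n : nat) (B : mat).

Lemma bil_ext x x' y y' : veq x x' -> veq y y' -> bil n B x y = bil n B x' y'.
Proof.
  intros Hx Hy. apply rsum_ext; intros i _. apply rsum_ext; intros j _. rewrite Hx, Hy. reflexivity.
Qed.

Lemma bil_left_linear : left_linear (bil n B).
Proof.
  split.
  - intros x x' y Hx. apply bil_ext; auto using veq_refl.
  - intros x x' y. unfold bil, vadd. rewrite <- rsum_add. apply rsum_ext; intros.
    rewrite <- rsum_add. apply rsum_ext; intros; ring.
  - intros a x y. unfold bil, vscal. rewrite <- rsum_mul_l. apply rsum_ext; intros.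
    rewrite <- rsum_mul_l. apply rsum_ext; intros; ring.
Qed.

Lemma bil_right_linear : left_linear (fun y x => bil n B x y).
Proof.
  split.
  - intros y y' x Hy. apply bil_ext; auto using veq_refl.
  - intros y y' x. unfold bil, vadd. rewrite <- rsum_add. apply rsum_ext; intros.
    rewrite <- rsum_add. apply rsum_ext; intros; ring.
  - intros a y x. unfold bil, vscal. rewrite <- rsum_mul_l. apply rsum_ext; intros.
    rewrite <- rsum_mul_l. apply rsum_ext; intros; ring.
Qed.

Lemma bil_sym x y : (forall i j, B i j = B j i) -> bil n B x y = bil n B y x.
Proof.
  intros HB. unfold bil. rewrite rsum_swap. apply rsum_ext; intros; apply rsum_ext; intros.
  rewrite HB. ring.
Qed.

Lemma bil_zero_l x y : (forall i, (i < n)%nat -> x i = 0) -> bil n B x y = 0.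
Proof.
  intros H. apply rsum_zero; intros i Hi; apply rsum_zero; intros j _. rewrite H; auto; ring.
Qed.

Definition uvec (i : nat) : vec := fun k => if Nat.eqb i k then 1 else 0.

Lemma bil_uvec i j : (i < n)%nat -> (j < n)%nat -> bil n B (uvec i) (uvec j) = B i j.
Proof.
  intros Hi Hj. unfold bil, uvec.
  rewrite <- (rsum_kron_l n i (fun a => B a j)) by auto. apply rsum_ext. intros a _.
  rewrite <- (rsum_kron_r n j (fun b => B a b)), <- rsum_mul_l by auto.
  apply rsum_ext. intros b _. rewrite (Nat.eqb_sym j b). ring.
Qed.

Lemma bil_orthonormal_quad d a E : orthonormal (bil n B) d E ->
  bil n B (lc d a E) (lc d a E) = rsum d (fun i => a i * a i).
Proof.
  intros HE. rewrite (ll_lc _ bil_left_linear). apply rsum_ext. intros i Hi.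
  rewrite (ll_lc _ bil_right_linear). f_equal. rewrite <- (rsum_kron_r d i a Hi).
  apply rsum_ext. intros j Hj. rewrite HE, (Nat.eqb_sym i j); auto.
Qed.

End BilinearForms.

Lemma bil_inner_form n V B : (forall i j, B i j = B j i) ->
  (forall x, V x -> nonzero_vec x -> 0 < bil n B x x) -> inner_form V (bil n B).
Proof. intros Hs Hp. split; auto using bil_left_linear, bil_sym. Qed.

Lemma dot_left_linear n : left_linear (dot n).
Proof.
  split.
  - intros x x' y Hx. apply rsum_ext; intros. rewrite Hx. reflexivity.
  - intros x x' y. unfold dot, vadd. rewrite <- rsum_add. apply rsum_ext; intros; ring.
  - intros a x y. unfold dot, vscal. rewrite <- rsum_mul_l. apply rsum_ext; intros; ring.
Qed.

Lemma dot_sym n x y : dot n x y = dot n y x.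
Proof. apply rsum_ext; intros; ring. Qed.

Lemma dot_nonneg n x : 0 <= dot n x x.
Proof. apply rsum_nonneg. intros; nra. Qed.

Lemma dot_eq0 n x : inRn n x -> dot n x x = 0 -> forall k, x k = 0.
Proof.
  intros Hx H0 k. destruct (Nat.lt_ge_cases k n) as [Hk|Hk]; [|auto].
  pose proof (rsum_ge_term n k (fun i => x i * x i) ltac:(intros; nra) Hk).
  fold (dot n x x) in H. nra.
Qed.

Lemma dot_inner_form n V : (forall x, V x -> inRn n x) -> inner_form V (dot n).
Proof.
  intros HV. split; [apply dot_left_linear | apply dot_sym |].
  intros x Hx [k Hk]. pose proof (dot_nonneg n x).
  destruct (Req_dec (dot n x x) 0) as [H0|]; [|lra].
  exfalso. apply Hk. apply (dot_eq0 n); auto.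
Qed.

Lemma ocomp_subspace n V U : is_subspace n V -> is_subspace n (ocomp n V U).
Proof.
  intros HV. pose proof (dot_left_linear n) as HL.
  split; [|split; [|split; [|split]]].
  - intros x [Hx _]. apply (subspace_inRn n V); auto.
  - intros x y [Hx Ho] Hxy. split; [apply (subspace_veq n V HV x); auto|].
    intros z Hz. rewrite <- (ll_ext _ HL x y z); auto.
  - split; [apply HV|]. intros y _. apply rsum_zero. intros; ring.
  - intros x y [Hx Hox] [Hy Hoy]. split; [apply (subspace_add n); auto|].
    intros z Hz. rewrite (ll_add _ HL), Hox, Hoy; auto; ring.
  - intros a x [Hx Hox]. split; [apply (subspace_scal n); auto|].
    intros z Hz. rewrite (ll_scal _ HL), Hox; auto; ring.
Qed.

(** * Entry bounds from lambda_+ *)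

Lemma inner_form_nonneg n V F x : is_subspace n V -> inner_form V F -> V x -> 0 <= F x x.
Proof.
  intros HV HF Hx. destruct (classic (nonzero_vec x)) as [Hnz|Hz].
  - apply Rlt_le, (if_pos V F HF); auto.
  - assert (E : veq x (vscal 0 x)).
    { intros k. unfold vscal. apply NNPP. intros Hk. apply Hz. exists k. lra. }
    rewrite (ll_ext F (if_linear V F HF) _ _ x E), (ll_scal F (if_linear V F HF)). lra.
Qed.

(* Polarization: expand [F (x + y) (x + y)] and [F (x - y) (x - y)], both nonnegative. *)
Lemma inner_form_cross_bound n V F x y a : is_subspace n V -> inner_form V F -> V x -> V y ->
  F x x <= a -> F y y <= a -> - a <= F x y <= a.
Proof.
  intros HV HF Hx Hy Hxa Hya. pose proof (if_linear V F HF) as HL.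
  assert (Hexp : forall b, F (vadd x (vscal b y)) (vadd x (vscal b y)) =
                           F x x + 2 * b * F x y + b * b * F y y).
  { intros b. rewrite (ll_add F HL), (ll_scal F HL), !(if_sym V F HF _ (vadd _ _)).
    rewrite !(ll_add F HL), !(ll_scal F HL), (if_sym V F HF y x). ring. }
  assert (Hsum : forall b, V (vadd x (vscal b y))).
  { intros b. apply (subspace_add n); auto. apply (subspace_scal n); auto. }
  pose proof (inner_form_nonneg n V F _ HV HF (Hsum 1)) as H1.
  pose proof (inner_form_nonneg n V F _ HV HF (Hsum (-1))) as H2.
  rewrite Hexp in H1, H2. split; nra.
Qed.

Lemma lambda_plus_quadratic n V G tau x : is_subspace n V -> lambda_plus_le n V G tau -> V x ->
  bil n G x x <= tau * dot n x x.
Proof.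
  intros HV Hl Hx. pose proof (dot_nonneg n x) as Hd.
  destruct (Req_dec (dot n x x) 0) as [Hz|Hnz].
  - rewrite bil_zero_l; [nra|]. intros i _. apply (dot_eq0 n); auto.
    apply (subspace_inRn n V); auto.
  - set (s := sqrt (dot n x x)).
    assert (Hs : 0 < s) by (apply sqrt_lt_R0; lra).
    assert (Hss : s * s = dot n x x) by (apply sqrt_sqrt; lra).
    assert (H1 : bil n G (vscal (/ s) x) (vscal (/ s) x) <= tau).
    { apply Hl; [apply (subspace_scal n); auto|].
      rewrite (ll_scal _ (dot_left_linear n)), dot_sym, (ll_scal _ (dot_left_linear n)), <- Hss.
      field. lra. }
    rewrite (ll_scal _ (bil_left_linear n G)), (ll_scal _ (bil_right_linear n G)) in H1.
    rewrite <- Hss. replace (bil n G x x) with ((s * s) * (/ s * (/ s * bil n G x x))) by (field; lra).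
    rewrite (Rmult_comm tau). apply Rmult_le_compat_l; nra.
Qed.

Section OrthogonalProjection.
Variables (n : nat) (V : vec -> Prop) (dq : nat) (q : nat -> vec).
Hypotheses (HV : is_subspace n V) (Hq : orthonormal_basis V (dot n) dq q).

Lemma orthogonal_decomposition u : inRn n u ->
  exists v w, V v /\ inRn n w /\ (forall y, V y -> dot n w y = 0) /\ veq u (vadd v w).
Proof.
  intros Hu. destruct Hq as (HqV & Hqo & Hqs). pose proof (dot_left_linear n) as HL.
  set (v := lc dq (fun l => dot n u (q l)) q).
  assert (HvV : V v) by (apply (subspace_lc n); auto).
  exists v, (vadd u (vscal (-1) v)). split; [|split; [|split]]; auto.
  - intros k Hk. unfold vadd, vscal. rewrite Hu, (subspace_inRn n V HV v) by auto. ring.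
  - intros y Hy. rewrite dot_sym, (ll_ext _ HL _ _ _ (orthonormal_expand _ HL dq q y Hqo (Hqs y Hy))).
    rewrite (ll_lc _ HL). apply rsum_zero. intros l Hl.
    rewrite (dot_sym n (q l)), (ll_add _ HL), (ll_scal _ HL). unfold v.
    rewrite orthonormal_coef; auto. ring.
  - intros k. unfold vadd, vscal. ring.
Qed.

Lemma dot_le_of_orthogonal u v w : veq u (vadd v w) -> dot n w v = 0 -> dot n v v <= dot n u u.
Proof.
  intros Hu Hwv. pose proof (dot_left_linear n) as HL. pose proof (dot_nonneg n w).
  rewrite (ll_ext _ HL _ _ _ Hu), (ll_add _ HL), !(dot_sym n _ u).
  rewrite !(ll_ext _ HL _ _ _ Hu), !(ll_add _ HL), (dot_sym n v w), Hwv. lra.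
Qed.

(* Project the unit vectors onto [V]; the support condition lets [G] see only the projections. *)
Lemma supported_entry_bound G tau : supported_on n V G -> inner_form V (bil n G) ->
  lambda_plus_le n V G tau -> 0 <= tau -> forall i j, - tau <= G i j <= tau.
Proof.
  intros [Hout Hperp] HG Hl Htau i j.
  destruct (Nat.lt_ge_cases i n) as [Hi|Hi]; [|rewrite Hout; auto; lra].
  destruct (Nat.lt_ge_cases j n) as [Hj|Hj]; [|rewrite Hout; auto; lra].
  assert (Huvec : forall a, (a < n)%nat -> inRn n (uvec a)).
  { intros a Ha k Hk. unfold uvec. destruct (Nat.eqb_spec a k); [lia|reflexivity]. }
  assert (Hproj : forall a, (a < n)%nat -> exists v w, V v /\ inRn n w /\
            (forall y, V y -> dot n w y = 0) /\ veq (uvec a) (vadd v w) /\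
            bil n G v v <= tau).
  { intros a Ha. destruct (orthogonal_decomposition (uvec a) (Huvec a Ha))
      as (v & w & Hv & Hw & Hwo & Hdec).
    exists v, w. repeat split; auto.
    assert (Hdot : dot n (uvec a) (uvec a) = 1).
    { unfold dot, uvec. rewrite <- (rsum_kron_l n a (fun _ => 1) Ha) at 1.
      apply rsum_ext. intros b _. destruct (Nat.eqb a b); ring. }
    pose proof (dot_le_of_orthogonal _ _ _ Hdec (Hwo v Hv)). pose proof (dot_nonneg n v).
    pose proof (lambda_plus_quadratic n V G tau v HV Hl Hv). nra. }
  destruct (Hproj i Hi) as (v & w & Hv & Hw & Hwo & Hdec & Hvv).
  destruct (Hproj j Hj) as (v' & w' & Hv' & Hw' & Hwo' & Hdec' & Hvv').
  rewrite <- (bil_uvec n G i j Hi Hj), (bil_ext n G _ _ _ _ Hdec Hdec').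
  rewrite (ll_add _ (bil_left_linear n G)), !(ll_add _ (bil_right_linear n G)).
  pose proof (subspace_inRn n V HV) as HVin.
  rewrite (proj1 (Hperp w v' Hw (HVin v' Hv') Hwo)), (proj1 (Hperp w w' Hw Hw' Hwo)),
    (proj2 (Hperp w' v (Hw') (HVin v Hv) Hwo')), Rplus_0_r, !Rplus_0_r.
  apply (inner_form_cross_bound n V); auto.
Qed.

End OrthogonalProjection.

(** * Frames *)

Definition mx_right_inverse (d : nat) (A B : mat) : Prop :=
  forall i l, (i < d)%nat -> (l < d)%nat ->
    rsum d (fun j => A i j * B j l) = if Nat.eqb i l then 1 else 0.

Section Frames.
Variables (n : nat) (br : vec -> vec -> vec) (h V : vec -> Prop) (T : mat) (tau : R)
  (d : nat) (p : nat -> vec).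
Hypotheses (HV : is_subspace n V) (HpV : forall i, (i < d)%nat -> V (p i))
  (Hps : forall x, V x -> in_span d p x).

(* [C] holds the coordinates, in the fixed basis [p], of a [G]-orthonormal basis of [V]. *)
Record frame (G C : mat) : Prop := {
  frame_supported : supported_on n V G;
  frame_sym : forall i j, G i j = G j i;
  frame_ad_inv : forall Y x y, h Y -> V x -> V y ->
    bil n G (br Y x) y + bil n G x (br Y y) = 0;
  frame_lambda : lambda_plus_le n V G tau;
  frame_orthonormal : orthonormal (bil n G) d (fun i => lc d (C i) p);
  frame_trace : rsum d (fun i => bil n T (lc d (C i) p) (lc d (C i) p)) = 1;
  frame_G_bound : forall i j, - tau <= G i j <= tau;
  frame_C_bound : forall i j, -1 <= C i j <= 1 }.

Lemma frame_of_inner_product G dq q : inner_form V (bil n T) -> orthonormal (bil n T) d p ->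
  orthonormal_basis V (dot n) dq q -> 0 <= tau ->
  inv_inner_product n br h V G -> trace_wrt n V G T 1 -> lambda_plus_le n V G tau ->
  exists C, frame G C.
Proof.
  intros HT Hp Hq Htau [Hsupp [Hsym [Hpos Had]]] (d' & e & HeV & He & Hes & Htr) Hl.
  assert (HG : inner_form V (bil n G)) by (apply bil_inner_form; auto).
  replace d' with d in *.
  2:{ apply (orthonormal_spanning_size (bil n T) (bil n G) d d' p e); auto using bil_left_linear.
      intros i Hi. apply Hes, HpV; auto. }
  set (C := fun i j => if Nat.ltb i d then if Nat.ltb j d then bil n T (e i) (p j) else 0 else 0).
  assert (HeC : forall i, (i < d)%nat -> veq (e i) (lc d (C i) p)).
  { intros i Hi k. rewrite (orthonormal_expand (bil n T) (bil_left_linear n T) d p (e i) Hp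
      (Hps _ (HeV i Hi)) k).
    apply lc_ext. intros j Hj. split; [|apply veq_refl].
    unfold C. rewrite (proj2 (Nat.ltb_lt i d) Hi), (proj2 (Nat.ltb_lt j d) Hj). reflexivity. }
  assert (HTe : forall i, (i < d)%nat -> bil n T (e i) (e i) <= 1).
  { intros i Hi. rewrite Htr. apply (rsum_ge_term d i (fun i => bil n T (e i) (e i))); auto.
    intros l Hl'. apply (inner_form_nonneg n V); auto. }
  exists C. split; auto.
  - intros i j Hi Hj. rewrite <- (bil_ext n G _ _ _ _ (HeC i Hi) (HeC j Hj)). exact (He i j Hi Hj).
  - rewrite Htr. apply rsum_ext. intros i Hi. symmetry. apply bil_ext; auto.
  - apply (supported_entry_bound n V dq q); auto.
  - intros i j. unfold C.
    destruct (Nat.ltb_spec i d) as [Hi|]; [|lra]. destruct (Nat.ltb_spec j d) as [Hj|]; [|lra].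
    assert (Hsq : C i j * C i j <= 1).
    { pose proof (HTe i Hi) as H1.
      rewrite (bil_ext n T _ _ _ _ (HeC i Hi) (HeC i Hi)), bil_orthonormal_quad in H1; auto.
      eapply Rle_trans; [|exact H1].
      apply (rsum_ge_term d j (fun l => C i l * C i l)); [intros; nra | auto]. }
    unfold C in Hsq. rewrite (proj2 (Nat.ltb_lt i d) Hi), (proj2 (Nat.ltb_lt j d) Hj) in Hsq.
    nra.
Qed.

Definition frame_dual (G C : mat) : mat := fun j l => bil n G (p j) (lc d (C l) p).

Lemma frame_right_inverse G C : frame G C -> mx_right_inverse d C (frame_dual G C).
Proof.
  intros HF i l Hi Hl. rewrite <- (frame_orthonormal G C HF i l Hi Hl).
  unfold frame_dual. symmetry. apply (ll_lc _ (bil_left_linear n G)).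
Qed.

Lemma inner_product_of_frame G C : frame G C -> mx_right_inverse d (frame_dual G C) C ->
  (inv_inner_product n br h V G /\ trace_wrt n V G T 1) /\ lambda_plus_le n V G tau.
Proof.
  intros HF Hinv. set (E := fun i => lc d (C i) p).
  assert (HEV : forall i, (i < d)%nat -> V (E i)) by (intros; apply (subspace_lc n); auto).
  assert (HEs : forall x, V x -> in_span d E x).
  { intros x Hx. apply (in_span_trans d d p); auto. intros j Hj.
    exists (frame_dual G C j). intros k. unfold E. rewrite lc_lc.
    rewrite <- (rsum_kron_l d j (fun i => p i k) Hj). apply rsum_ext. intros i Hi.
    rewrite Hinv; auto. }
  split; [split; [split; [apply HF | split; [apply HF | split; [| apply HF]]] |] | apply HF].
  - intros x Hx Hnz. destruct (HEs x Hx) as [a Ha].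
    rewrite (bil_ext n G _ _ _ _ Ha Ha), bil_orthonormal_quad by apply HF.
    destruct (classic (exists i, (i < d)%nat /\ a i <> 0)) as [[i [Hi Hai]]|Hno].
    + eapply Rlt_le_trans; [|apply (rsum_ge_term d i (fun i => a i * a i)); auto; intros; nra].
      nra.
    + exfalso. destruct Hnz as [k Hk]. apply Hk. rewrite Ha. apply rsum_zero. intros i Hi.
      destruct (Req_dec (a i) 0) as [->|]; [ring|]. exfalso; eauto.
  - exists d, E. split; [auto | split; [apply HF | split; [auto | symmetry; apply HF]]].
Qed.

End Frames.

(** * Compactness *)

(* MathComp is imported only from here on: its [nat] notations would shadow the Peano
   ones used in [Defs] and above. *)
From HB Require Import structures.
From mathcomp Require Import all_boot all_algebra.
From mathcomp Require Import all_classical all_reals all_analysis Rstruct Rstruct_topology.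
Import function_spaces.ArrowAsProduct.

HB.instance Definition _ := Topological.copy mat (nat -> nat -> R).
HB.instance Definition _ := Pointed.copy mat (nat -> nat -> R).

Section RightInverse.
Local Open Scope ring_scope.

Lemma rsum_big d (f : nat -> R) : rsum d f = \sum_(i < d) f i.
Proof. elim: d => [|d IHd] /=; [by rewrite big_ord0 | by rewrite big_ord_recr /= IHd]. Qed.

Lemma mx_right_inverse_sym d (A B : mat) : mx_right_inverse d A B -> mx_right_inverse d B A.
Proof.
  pose Am := \matrix_(i < d, j < d) A i j.
  pose Bm := \matrix_(i < d, j < d) B i j.
  have kron_mx (a b : 'I_d) : (if Nat.eqb a b then 1 else 0) = (1%:M : 'M[R]_d) a b.
    rewrite !mxE. case: (Nat.eqb_spec a b) => [/val_inj -> | Hne]; first by rewrite eqxx.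
    by case: eqP => // E; case: Hne; rewrite E.
  have prodE (M N : mat) (a b : 'I_d) : rsum d (fun j => M a j * N j b) =
      ((\matrix_(i < d, j < d) M i j) *m (\matrix_(i < d, j < d) N i j)) a b.
    by rewrite rsum_big !mxE; apply: eq_bigr => j _; rewrite !mxE.
  move=> H i l /ltP Hi /ltP Hl.
  have HAB : Am *m Bm = 1%:M.
    apply/matrixP => a b. by rewrite -prodE -kron_mx H //; apply/ltP.
  by rewrite (prodE B A (Ordinal Hi) (Ordinal Hl)) (mulmx1C HAB) -kron_mx.
Qed.

End RightInverse.

Section RealContinuity.
Local Open Scope classical_set_scope.
Context {T : topologicalType}.

Lemma continuous_Rplus (f g : T -> R) : continuous f -> continuous g ->
  continuous (fun z => Rplus (f z) (g z)).
Proof. move=> hf hg z. exact: (cvgD (V := R^o) (hf z) (hg z)). Qed.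

Lemma continuous_Rmult (f g : T -> R) : continuous f -> continuous g ->
  continuous (fun z => Rmult (f z) (g z)).
Proof. move=> hf hg z. exact: (cvgM (K := R) (hf z) (hg z)). Qed.

Lemma continuous_rsum m (F : nat -> T -> R) : (forall i, continuous (F i)) ->
  continuous (fun z => rsum m (fun i => F i z)).
Proof.
  move=> hF. elim: m => [|m IH] /=; [exact: cst_continuous | exact: continuous_Rplus].
Qed.

Lemma closure_preimage (S : set T) (f : T -> R) (B : set R) :
  continuous f -> closed B -> (forall z, S z -> B (f z)) -> closure S `<=` f @^-1` B.
Proof.
  move=> hf hB hS. rewrite ((closure_id _).1 (preimage_closed (fun z _ => hf z) hB)). exact: closureS.
Qed.

Lemma closure_Rle (S : set T) (f : T -> R) c : continuous f ->
  (forall z, S z -> Rle (f z) c) -> forall z, closure S z -> Rle (f z) c.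
Proof.
  move=> hf hS z hz.
  have hB : closed (fun r : R => Rle r c).
    have -> : (fun r : R => Rle r c) = [set r : R | (r <= c)%R].
      by apply/funext => r; apply/propext; split => /RleP.
    exact: closed_le.
  exact: (closure_preimage S f _ hf hB hS z hz).
Qed.

Lemma closure_Rge (S : set T) (f : T -> R) c : continuous f ->
  (forall z, S z -> Rle c (f z)) -> forall z, closure S z -> Rle c (f z).
Proof.
  move=> hf hS z hz.
  have hB : closed (fun r : R => Rle c r).
    have -> : (fun r : R => Rle c r) = [set r : R | (c <= r)%R].
      by apply/funext => r; apply/propext; split => /RleP.
    exact: closed_ge.
  exact: (closure_preimage S f _ hf hB hS z hz).
Qed.

Lemma closure_Req (S : set T) (f : T -> R) c : continuous f ->
  (forall z, S z -> f z = c) -> forall z, closure S z -> f z = c.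
Proof.
  move=> hf hS z hz. apply: Rle_antisym.
  - by apply: (closure_Rle S f c hf _ z hz) => w /hS ->; exact: Rle_refl.
  - by apply: (closure_Rge S f c hf _ z hz) => w /hS ->; exact: Rle_refl.
Qed.

End RealContinuity.

Lemma entry_continuous i j : continuous (fun M : mat => M i j).
Proof.
  have row_i : continuous (fun M : mat => M i) := @proj_continuous nat (fun _ => nat -> R) i.
  have entry_j : continuous (fun v : nat -> R => v j) := @proj_continuous nat (fun _ => R) j.
  move=> M. exact: (continuous_comp (row_i M) (entry_j (M i))).
Qed.

Lemma fst_entry_continuous i j : continuous (fun Z : mat * mat => Z.1 i j).
Proof.
  have fst_cont : continuous (@fst mat mat) by move=> Z; exact: cvg_fst.
  move=> Z. exact: (continuous_comp (fst_cont Z) (entry_continuous i j _)).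
Qed.

Lemma snd_entry_continuous i j : continuous (fun Z : mat * mat => Z.2 i j).
Proof.
  have snd_cont : continuous (@snd mat mat) by move=> Z; exact: cvg_snd.
  move=> Z. exact: (continuous_comp (snd_cont Z) (entry_continuous i j _)).
Qed.

(* [refine] rather than [apply]: [apply] would unfold [continuous] to a pointwise goal. *)
Ltac solve_continuous := repeat (cbv beta; match goal with
 | |- continuous (fun Z => rsum ?m (fun i => @?F Z i)) =>
     refine (continuous_rsum m (fun i Z => F Z i) _); intro
 | |- continuous (fun Z => Rplus (@?f Z) (@?g Z)) => refine (continuous_Rplus f g _ _)
 | |- continuous (fun Z => Rmult (@?f Z) (@?g Z)) => refine (continuous_Rmult f g _ _)
 | |- continuous (fun Z => (fst Z) ?i ?j) => apply fst_entry_continuous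
 | |- continuous (fun Z => (snd Z) ?i ?j) => apply snd_entry_continuous
 | |- continuous (fun _ => _) => exact: cst_continuous
 end).

Section FrameCompactness.
Local Open Scope classical_set_scope.
Local Open Scope R_scope.
Variables (n : nat) (br : vec -> vec -> vec) (h V : vec -> Prop) (T : mat) (tau : R)
  (d : nat) (p : nat -> vec).

Definition frames : set (mat * mat) := [set Z | frame n br h V T tau d p Z.1 Z.2].

Lemma frames_closed : closed frames.
Proof.
  apply/closure_id/seteqP; split; first exact: subset_closure.
  move=> Z HZ.
  have Req (f : mat * mat -> R) (c : R) : continuous f -> (forall W, frames W -> f W = c) -> f Z = c.
    by move=> hf hS; exact: (closure_Req frames f c hf hS Z HZ).
  have Rle_ (f : mat * mat -> R) (c : R) : continuous f -> (forall W, frames W -> Rle (f W) c) -> Rle (f Z) c.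
    by move=> hf hS; exact: (closure_Rle frames f c hf hS Z HZ).
  have Rge_ (f : mat * mat -> R) (c : R) : continuous f -> (forall W, frames W -> Rle c (f W)) -> Rle c (f Z).
    by move=> hf hS; exact: (closure_Rge frames f c hf hS Z HZ).
  split.
  - split.
    + move=> i j Hij. apply: (Req (fun W => W.1 i j)); first by solve_continuous.
      by move=> W [[Hout _] _ _ _ _ _ _ _]; apply: Hout.
    + move=> x y Hx Hy Hxv; split.
      * apply: (Req (fun W => bil n W.1 x y)); first by unfold bil; solve_continuous.
        by move=> W [[_ Hperp] _ _ _ _ _ _ _]; case: (Hperp x y Hx Hy Hxv).
      * apply: (Req (fun W => bil n W.1 y x)); first by unfold bil; solve_continuous.
        by move=> W [[_ Hperp] _ _ _ _ _ _ _]; case: (Hperp x y Hx Hy Hxv).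
  - move=> i j.
    have E : (fun W : mat * mat => W.1 i j + -1 * W.1 j i) Z = 0.
      apply: (Req (fun W : mat * mat => W.1 i j + -1 * W.1 j i)); first by solve_continuous.
      by move=> W [_ Hsym _ _ _ _ _ _]; rewrite Hsym; lra.
    simpl in E. lra.
  - move=> Y x y HY Hx Hy.
    apply: (Req (fun W => Rplus (bil n W.1 (br Y x) y) (bil n W.1 x (br Y y))));
      first by unfold bil; solve_continuous.
    by move=> W [_ _ Had _ _ _ _ _]; apply: Had.
  - move=> X HX HXX. apply: (Rle_ (fun W => bil n W.1 X X)); first by unfold bil; solve_continuous.
    by move=> W [_ _ _ Hl _ _ _ _]; apply: Hl.
  - move=> i j Hi Hj.
    apply: (Req (fun W => bil n W.1 (lc d (W.2 i) p) (lc d (W.2 j) p)));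
      first by unfold bil, lc; solve_continuous.
    by move=> W [_ _ _ _ Hon _ _ _]; apply: Hon.
  - apply: (Req (fun W => rsum d (fun i => bil n T (lc d (W.2 i) p) (lc d (W.2 i) p))));
      first by unfold bil, lc; solve_continuous.
    by move=> W [_ _ _ _ _ Htr _ _].
  - move=> i j; split.
    + apply: (Rge_ (fun W => W.1 i j)); first by solve_continuous.
      by move=> W [_ _ _ _ _ _ HG _]; case: (HG i j).
    + apply: (Rle_ (fun W => W.1 i j)); first by solve_continuous.
      by move=> W [_ _ _ _ _ _ HG _]; case: (HG i j).
  - move=> i j; split.
    + apply: (Rge_ (fun W => W.2 i j)); first by solve_continuous.
      by move=> W [_ _ _ _ _ _ _ HC]; case: (HC i j).
    + apply: (Rle_ (fun W => W.2 i j)); first by solve_continuous.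
      by move=> W [_ _ _ _ _ _ _ HC]; case: (HC i j).
Qed.

End FrameCompactness.

Section Compactness.
Local Open Scope classical_set_scope.

Definition entry_box (a : R) : set mat := [set M | forall i j, Rle (- a) (M i j) /\ Rle (M i j) a].

Lemma entry_box_compact a : compact (entry_box a).
Proof.
  have seg : compact (fun r : R => Rle (- a) r /\ Rle r a).
    have -> : (fun r : R => Rle (- a) r /\ Rle r a) = `[(- a)%R, a].
      apply/funext => r; apply/propext; rewrite /= in_itv /=.
      by split => [[/RleP -> /RleP ->] | /andP [/RleP ? /RleP ?]].
    exact: segment_compact.
  have row : compact [set v : nat -> R | forall j, Rle (- a) (v j) /\ Rle (v j) a].
    exact: (@tychonoff nat (fun _ => R) _ (fun _ => seg)).
  exact: (@tychonoff nat (fun _ => nat -> R) _ (fun _ => row)).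
Qed.

Lemma frames_compact n br h V T tau d p :
  compact (frames n br h V T tau d p).
Proof.
  apply: (subclosed_compact (frames_closed n br h V T tau d p)
    (compact_setX (entry_box_compact tau) (entry_box_compact 1))).
  by move=> Z [_ _ _ _ _ _ HG HC]; split => i j; [exact: HG | exact: HC].
Qed.

Lemma nbhs_Rabs_lt (a eps : R) : Rlt 0 eps -> nbhs a (fun r : R => Rlt (Rabs (r - a)) eps).
Proof.
  move=> He.
  have Ho : open ([set r : R | (a - eps < r)%R] `&` [set r : R | (r < a + eps)%R]).
    apply: openI; [exact: open_gt|exact: open_lt].
  have Hin : ([set r : R | (a - eps < r)%R] `&` [set r : R | (r < a + eps)%R]) a.
    split; apply/RltP; rewrite -?RminusE -?RplusE; lra.
  apply: (filterS _ (open_nbhs_nbhs (conj Ho Hin))).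
  move=> r [/RltP H1 /RltP H2]. rewrite -?RminusE -?RplusE in H1 H2.
  apply: Rabs_def1; lra.
Qed.

Lemma mopen_open n (U : mat -> Prop) : mopen n U -> open (U : set mat).
Proof.
  move=> HU. rewrite openE => A /HU [eps [He Hball]].
  pose close (i j : nat) (B : mat) := Rlt (Rabs (B i j - A i j)) eps.
  have close_entry i j : nbhs A (close i j).
    exact: (entry_continuous i j A _ (nbhs_Rabs_lt (A i j) eps He)).
  have close_all : nbhs A (fun B : mat => forall i j : 'I_n, close i j B).
    apply: (@filter_forall _ _ (fun (i : 'I_n) B => forall j : 'I_n, close i j B) (nbhs A)) => i.
    exact: (@filter_forall _ _ (fun (j : 'I_n) B => close i j B) (nbhs A) _ (fun j => close_entry i j)).
  apply: (filterS _ close_all) => B HB. apply: Hball => i j /ltP Hi /ltP Hj.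
  exact: (HB (Ordinal Hi) (Ordinal Hj)).
Qed.

Lemma mcompact_of_compact n (K : mat -> Prop) : compact (K : set mat) -> mcompact n K.
Proof.
  move=> HK I U HU Hcov. rewrite compact_cover in HK.
  have HUcov : (K : set mat) `<=` \bigcup_(i in [set: {classic I}]) (U i : set mat).
    by move=> A /Hcov [i Hi]; exists i.
  have [D _ HD] := HK {classic I} setT (fun i => U i : set mat)
    (fun i _ => mopen_open n (U i) (HU i)) HUcov.
  exists (finmap.enum_fset D) => A /HD [i Hi HUi]. exists i; split => //.
  have : i \in finmap.enum_fset D := Hi.
  elim: (finmap.enum_fset D) => [|j s IH] //=. rewrite in_cons => /orP [/eqP ->|Hs]; auto.
Qed.

End Compactness.

Lemma inner_product_iff_frame n br h V T tau d p dq q G :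
  is_subspace n V -> inner_form V (bil n T) -> orthonormal_basis V (bil n T) d p ->
  orthonormal_basis V (dot n) dq q -> Rle 0 tau ->
  ((inv_inner_product n br h V G /\ trace_wrt n V G T 1) /\ lambda_plus_le n V G tau) <->
  exists C, frame n br h V T tau d p G C.
Proof.
  move=> HV HT [HpV [Hp Hps]] Hq Htau. split.
  - move=> [[HG Htr] Hl]. exact: (frame_of_inner_product n br h V T tau d p HV HpV Hps G dq q).
  - move=> [C HC]. apply: (inner_product_of_frame n br h V T tau d p HV HpV Hps G C HC).
    exact: (mx_right_inverse_sym _ _ _ (frame_right_inverse n br h V T tau d p G C HC)).
Qed.

Lemma fst_frames_compact n br h V T tau d p : compact (fst @` frames n br h V T tau d p)%classic.
Proof.
  apply: continuous_compact; last exact: frames_compact.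
  apply: continuous_subspaceT => Z. exact: cvg_fst.
Qed.

Theorem mainTheorem14 (n : nat) (br : vec -> vec -> vec) (h k : vec -> Prop)
  (T : mat) (tau : R) :
  is_lie_algebra n br ->
  Q_ad_invariant n br ->
  is_subalgebra n br h ->
  dim_ge n (ocomp n (whole n) h) 3 ->
  Hyp_H n br h ->
  M_k n br h (whole n) T ->
  is_subalgebra n br k ->
  (forall x, h x -> k x) ->
  (exists x, k x /\ ~ h x) ->
  0 < tau ->
  mcompact n (C_set n br h k T tau).
Proof.
  move=> _ _ _ _ _ [_ [Tsym [Tpos _]]] [Hk _] _ _ Htau.
  set V := ocomp n k h.
  have HV : is_subspace n V := ocomp_subspace n k h Hk.
  have HT : inner_form V (bil n T).
    apply: bil_inner_form => // x [Hx Hxh] Hnz; apply: Tpos => //.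
    by split => //; apply: (subspace_inRn n k).
  have [[G0 [[_ [d0 [e0 [He0V [_ [He0s _]]]]]] _]] | Hempty] :=
    pselect (exists G0, C_set n br h k T tau G0); last first.
    by move=> I U _ _; exists nil => A HA; case: Hempty; exists A.
  have [d [p Hp]] := exists_orthonormal_basis n V (bil n T) HV HT d0 e0 He0V He0s.
  have [dq [q Hq]] := exists_orthonormal_basis n V (dot n) HV
    (dot_inner_form n V (subspace_inRn n V HV)) d0 e0 He0V He0s.
  have Hframe G := inner_product_iff_frame n br h V T tau d p dq q G HV HT Hp Hq (Rlt_le _ _ Htau).
  apply: mcompact_of_compact.
  have -> : (C_set n br h k T tau : set mat) = (fst @` frames n br h V T tau d p)%classic.
    apply/seteqP; split => G.
    - by move=> /Hframe [C HC]; exists (G, C).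
    - by move=> [[G' C] HC <-]; apply/Hframe; exists C.
  exact: fst_frames_compact.
Qed.
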